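(* Let $R$ be any ring and let $x,y\in R$ satisfy $x^2=0$, $y^2=0$, $x\neq 0$, $y\neq 0$. If $x\circ y=x+y-xy$ is nilpotent, then $xy$ is nilpotent.
   Context: Rings are associative and not necessarily unital. *)

From mathcomp Require Import all_boot all_algebra.
Set Implicit Arguments. Unset Strict Implicit. Unset Printing Implicit Defensive.
Import GRing.Theory.
Local Open Scope ring_scope.

Definition rng_axioms (V : zmodType) (mul : V -> V -> V) : Prop :=
  [/\ forall a b c, mul a (mul b c) = mul (mul a b) c,
      forall a b c, mul a (b + c) = mul a b + mul a c &
      forall a b c, mul (a + b) c = mul a c + mul b c].

(* rpow mul n a = a * a * ... * a  with n+1 factors (no unit needed). *)
Fixpoint rpow (V : zmodType) (mul : V -> V -> V) (n : nat) (a : V) : V :=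
  match n with
  | O => a
  | S m => mul a (rpow mul m a)
  end.

Definition rnilpotent (V : zmodType) (mul : V -> V -> V) (a : V) : Prop :=
  exists n : nat, rpow mul n a = 0.

Definition circ (V : zmodType) (mul : V -> V -> V) (x y : V) : V :=
  x + y - mul x y.

From mathcomp Require Import all_boot all_algebra.
From mathcomp Require Import zify.
Local Open Scope ring_scope.
Import GRing.Theory.

(* Write z := x o y and a := xy.  From x^2 = y^2 = 0 one gets xz = a and
   az = ax - a^2, so the elements d_m := x z^(m+1) satisfy the recurrence
   d_(m+2) + a d_(m+1) = a d_m with d_0 = a.  If z^n = 0 then d_m = 0 for
   m >= n, and the recurrence propagates this backwards: a^j d_m = 0 whenever
   m + j >= n.  Taking m = 0 and j = n gives a^(n+1) = 0. *)

Lemma iter_additive_recurrence_eq0 (V : zmodType) (f : V -> V) (d : nat -> V)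
    (n : nat) :
  f 0 = 0 -> {morph f : u v / u + v} ->
  (forall m, d m.+2 + f (d m.+1) = f (d m)) ->
  (forall m, (n <= m)%N -> d m = 0) ->
  forall j m, (n <= m + j)%N -> iter j f (d m) = 0.
Proof.
move=> f0 fD drec dn; elim=> [|j IHj] m hmj; first by rewrite dn // -(addn0 m).
have iterD k u v : iter k f (u + v) = iter k f u + iter k f v.
  by elim: k => //= k ->; rewrite fD.
rewrite iterSr -drec iterD IHj; last by lia.
by rewrite -iterSr iterS IHj ?f0 ?add0r //; lia.
Qed.

Lemma rpow_iter (V : zmodType) (mul : V -> V -> V) n a :
  rpow mul n a = iter n (mul a) a.
Proof. by elim: n => //= n ->. Qed.

Section Rng.

Variables (V : zmodType) (mul : V -> V -> V).
Hypotheses (mulA : forall a b c, mul a (mul b c) = mul (mul a b) c)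
           (mulDr : forall a b c, mul a (b + c) = mul a b + mul a c)
           (mulDl : forall a b c, mul (a + b) c = mul a c + mul b c).

Lemma rng_mul0l v : mul 0 v = 0.
Proof. by apply: (addrI (mul 0 v)); rewrite -mulDl !addr0. Qed.

Lemma rng_mul0r v : mul v 0 = 0.
Proof. by apply: (addrI (mul v 0)); rewrite -mulDr !addr0. Qed.

Lemma rng_mulNl u v : mul (- u) v = - mul u v.
Proof. by apply: (addrI (mul u v)); rewrite -mulDl !subrr rng_mul0l. Qed.

Lemma rng_mulNr u v : mul u (- v) = - mul u v.
Proof. by apply: (addrI (mul u v)); rewrite -mulDr !subrr rng_mul0r. Qed.

Lemma rpow_eq0_ge z n m : rpow mul n z = 0 -> (n <= m)%N -> rpow mul m z = 0.
Proof.
move=> zn; elim: m => [|m IHm]; first by rewrite leqn0 => /eqP <-.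
by rewrite leq_eqVlt ltnS => /predU1P [<- // | /IHm /= ->]; rewrite rng_mul0r.
Qed.

Variables (x y : V).
Hypotheses (x2 : mul x x = 0) (y2 : mul y y = 0).

Local Notation z := (circ mul x y).
Local Notation a := (mul x y).

Lemma mul_circ_sqr0l : mul x z = a.
Proof.
by rewrite /circ mulDr rng_mulNr mulDr x2 mulA x2 rng_mul0l add0r subr0.
Qed.

Lemma mul_prod_circ_sqr0 : mul a z = mul a x - mul a a.
Proof.
have ay : mul a y = 0 by rewrite -mulA y2 rng_mul0r.
by rewrite /circ mulDr rng_mulNr mulDr ay addr0.
Qed.

Lemma circ_pow_recurrence m :
  mul x (rpow mul m.+2 z) + mul a (mul x (rpow mul m.+1 z))
  = mul a (mul x (rpow mul m z)).
Proof.
rewrite /= !(mulA x z) mul_circ_sqr0l (mulA a z) mul_prod_circ_sqr0.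
by rewrite mulDl rng_mulNl -!mulA addrNK.
Qed.

End Rng.

Theorem lemma2p2 (V : zmodType) (mul : V -> V -> V) (Hring : rng_axioms mul)
  (x y : V) (hx2 : mul x x = 0) (hy2 : mul y y = 0) (hx : x <> 0) (hy : y <> 0) :
  rnilpotent mul (circ mul x y) -> rnilpotent mul (mul x y).
Proof.
case: Hring => mulA mulDr mulDl [n zn].
pose d m := mul x (rpow mul m (circ mul x y)).
have d0 : d 0%N = mul x y by rewrite /d mul_circ_sqr0l.
exists n; rewrite rpow_iter -{2}d0.
apply: (@iter_additive_recurrence_eq0 V (mul (mul x y)) d n) => //.
- exact: rng_mul0r.
- by move=> m; apply: circ_pow_recurrence.
- by move=> m nm; rewrite /d (rpow_eq0_ge _ _ mulDr _ _ _ zn nm) rng_mul0r.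
Qed.
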